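(* For all $x\in\mathbb{C}$ and all integers $n\ge0$, \[ \sum_{k=0}^n x^k\big(3L_{4k}+(7x-2)F_{4k+4}\big)=7x^{n+1}F_{4n+4} \] and \[ \sum_{k=0}^n x^k\big(15F_{4k}+(7x-2)L_{4k+4}\big)=7\big(x^{n+1}L_{4n+4}-2\big). \]
   Context: $F_n,L_n$ are the Fibonacci and Lucas numbers: $F_0=0$, $F_1=1$, $L_0=2$, $L_1=1$, $W_n=W_{n-1}+W_{n-2}$. *)

From HB Require Import structures.
From mathcomp Require Import all_boot all_order all_algebra.
From mathcomp Require Import complex.
From mathcomp Require Import Rstruct.
From Stdlib Require Import Reals.
Set Implicit Arguments. Unset Strict Implicit. Unset Printing Implicit Defensive.

Fixpoint fib (n : nat) : nat :=
  match n with
  | 0 => 0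
  | 1 => 1
  | (m.+1 as p).+1 => fib p + fib m
  end.

Fixpoint lucas (n : nat) : nat :=
  match n with
  | 0 => 2
  | 1 => 1
  | (m.+1 as p).+1 => lucas p + lucas m
  end.

Notation Cplx := (complex Rdefinitions.R).

(** With [w k = F_(4k)] (resp. [L_(4k)]), the summands are the differences
    [7 x^(k+1) w_(k+1) - 7 x^k w_k]: this is the content of the identities
    [7 F_m + 3 L_m = 2 F_(m+4)] and [15 F_m + 7 L_m = 2 L_(m+4)], both of which
    reduce to [L_m + F_m = 2 F_(m+1)] by unfolding the recurrences. The sums
    therefore telescope, to [7 x^(n+1) w_(n+1) - 7 w_0] with [F_0 = 0] and
    [L_0 = 2]. *)

From mathcomp Require Import all_boot all_order all_algebra complex Rstruct.
From mathcomp Require Import ring zify.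
Import GRing.Theory.
Local Open Scope ring_scope.

Lemma lucas_add_fib (m : nat) : (lucas m + fib m = 2 * fib m.+1)%N.
Proof.
elim/ltn_ind: m => -[|[|m]] // IH.
by move: (IH m (leqnSn _)) (IH m.+1 (ltnSn _)) => /=; lia.
Qed.

Lemma fib_add4 (m : nat) : (2 * fib m.+4 = 7 * fib m + 3 * lucas m)%N.
Proof. by move: (lucas_add_fib m) => /=; lia. Qed.

Lemma lucas_add4 (m : nat) : (2 * lucas m.+4 = 15 * fib m + 7 * lucas m)%N.
Proof. by move: (lucas_add_fib m) (lucas_add_fib m.+1) => /=; lia. Qed.

Lemma telescope_sum_weighted (R : comPzRingType) (a b x : R) (w c : nat -> R)
    (n : nat) :
  (forall k, a * w k + c k = b * w k.+1) ->
  \sum_(0 <= k < n.+1) x ^+ k * (c k + (a * x - b) * w k.+1)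
    = a * (x ^+ n.+1 * w n.+1 - w 0).
Proof.
move=> rec; pose u k := a * (x ^+ k * w k).
rewrite (eq_bigr (fun k => u k.+1 - u k)) => [|k _].
  by rewrite telescope_sumr // /u expr0 mul1r mulrBr.
have -> : c k = b * w k.+1 - a * w k by rewrite -rec; ring.
by rewrite /u exprS; ring.
Qed.

Theorem corollary8 (x : Cplx) (n : nat) :
  \sum_(0 <= k < n.+1) x ^+ k * (3 * (lucas (4 * k))%:R + (7 * x - 2) * (fib (4 * k + 4))%:R)
    = 7 * x ^+ n.+1 * (fib (4 * n + 4))%:R
  /\
  \sum_(0 <= k < n.+1) x ^+ k * (15 * (fib (4 * k))%:R + (7 * x - 2) * (lucas (4 * k + 4))%:R)
    = 7 * (x ^+ n.+1 * (lucas (4 * n + 4))%:R - 2).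
Proof.
split; under eq_bigr => k _ do rewrite -mulnSr.
- rewrite (@telescope_sum_weighted _ 7 2 x (fun k => (fib (4 * k))%:R)
            (fun k => 3 * (lucas (4 * k))%:R)) => [|k].
    by rewrite muln0 subr0 mulnSr mulrA.
  by rewrite -!natrM -natrD mulnSr addn4 -fib_add4 natrM.
- rewrite (@telescope_sum_weighted _ 7 2 x (fun k => (lucas (4 * k))%:R)
            (fun k => 15 * (fib (4 * k))%:R)) => [|k].
    by rewrite muln0 mulnSr.
  by rewrite -!natrM -natrD mulnSr addn4 addnC -lucas_add4 natrM.
Qed.
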